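(* Let $c<0$, $k>0$ and $R>0$, and let $f(x)=\sum_{n=0}^\infty b_nx^n$ with $b_n=\frac{(-c/4)^n}{n!\,(k,n)}$ (a series converging for all real $x$). Then: (1) $t\mapsto\log f(Re^{-t})$ is convex on $(0,\infty)$, so that $f(\sqrt{xy})\le\sqrt{f(x)f(y)}$ for all $x,y\in(0,\infty)$, with equality if and only if $x=y$. (2) $\log f(x)$ is concave on $(0,\infty)$, so that $\sqrt{f(x)f(y)}\le f((x+y)/2)$ for all $x,y\in(0,\infty)$, with equality if and only if $x=y$. (3) $f$ is convex on $(0,\infty)$, so that $f((x+y)/2)\le\frac12(f(x)+f(y))$ for all $x,y\in(0,\infty)$, with equality if and only if $x=y$. (4) If $k>-1-cR/4$, then $t\mapsto f(R(1-e^{-t}))$ is concave on $(0,\infty)$, so that $\frac{f(x)+f(y)}{2}\le f\big(R-\sqrt{(R-x)(R-y)}\big)$ for all $x,y\in(0,R)$, with equality if and only if $x=y$.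
   Context: $(k,0)=1$ and $(k,n)=k(k+1)\cdots(k+n-1)$ for $n\ge1$. The function $f$ is the generalized-normalized Bessel function of the first kind of order $p$, with $k=p+(b+1)/2$ for real parameters $p,b$. *)

From Stdlib Require Import Reals.
From Coquelicot Require Import Coquelicot.
Open Scope R_scope.

Fixpoint poch (k : R) (n : nat) : R :=
  match n with
  | O => 1
  | S m => poch k m * (k + INR m)
  end.

Definition bcoef (c k : R) (n : nat) : R :=
  (- c / 4) ^ n / (INR (Stdlib.Arith.Factorial.fact n) * poch k n).

Definition fB (c k : R) (x : R) : R := PSeries (bcoef c k) x.

Definition convex_pos (g : R -> R) : Prop :=
  forall x y t, 0 < x -> 0 < y -> 0 <= t <= 1 ->
    g (t * x + (1 - t) * y) <= t * g x + (1 - t) * g y.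

Definition concave_pos (g : R -> R) : Prop :=
  forall x y t, 0 < x -> 0 < y -> 0 <= t <= 1 ->
    t * g x + (1 - t) * g y <= g (t * x + (1 - t) * y).

From Stdlib Require Import Reals Lra Lia.
From Coquelicot Require Import Coquelicot.
Open Scope R_scope.

(* Part (1) holds for every power series f with positive coefficients: writing
   x = e^u, termwise weighted AM-GM gives Hoelder's inequality
   f(x^t y^(1-t)) <= f(x)^t f(y)^(1-t), i.e. u |-> ln f(e^u) is convex.
   Part (3) is f'' > 0.  For (2), f solves x f'' + k f' = (-c/4) f; for
   phi(x) = x (f'^2 - f f'') this ODE gives (x^k phi)' = x^k f'^2 > 0, and x^k phi
   tends to 0 at 0+, so f'^2 > f f'' (a Turan-type inequality), i.e. (ln f)'' < 0.
   For (4), the second derivative of t |-> f(R (1 - e^-t)) has the sign of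
   (R - x) f''(x) - f'(x) with x = R (1 - e^-t), and this power series in x has
   negative coefficients, since those of f'' are those of f' times
   (-c/4) / (k + n + 1) and (R - x) (-c/4) < k + 1. *)

Lemma le_with_equality_case (P Q x y : R) :
  (x <> y -> P < Q) -> (x = y -> P = Q) -> P <= Q /\ (P = Q <-> x = y).
Proof.
  intros hlt heq; destruct (Req_dec x y) as [e | ne].
  - specialize (heq e); split; [lra | tauto].
  - specialize (hlt ne); split; [lra | split; [lra | tauto]].
Qed.

Definition strictly_convex_pos (g : R -> R) : Prop :=
  forall x y t, 0 < x -> 0 < y -> x <> y -> 0 < t < 1 ->
    g (t * x + (1 - t) * y) < t * g x + (1 - t) * g y.

Definition strictly_concave_pos (g : R -> R) : Prop :=
  forall x y t, 0 < x -> 0 < y -> x <> y -> 0 < t < 1 ->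
    t * g x + (1 - t) * g y < g (t * x + (1 - t) * y).

Lemma strictly_concave_opp (g : R -> R) :
  strictly_convex_pos (fun x => - g x) -> strictly_concave_pos g.
Proof. intros hg x y t hx hy hxy ht; specialize (hg x y t hx hy hxy ht); lra. Qed.

Lemma convex_pos_of_strictly (g : R -> R) : strictly_convex_pos g -> convex_pos g.
Proof.
  intros hg x y t hx hy ht.
  destruct (Req_dec t 0) as [-> | ht0].
  { replace (0 * x + (1 - 0) * y) with y by ring; lra. }
  destruct (Req_dec t 1) as [-> | ht1].
  { replace (1 * x + (1 - 1) * y) with x by ring; lra. }
  destruct (Req_dec x y) as [<- | hxy].
  - replace (t * x + (1 - t) * x) with x by ring; lra.
  - apply Rlt_le, hg; auto; lra.
Qed.

Lemma concave_pos_of_strictly (g : R -> R) : strictly_concave_pos g -> concave_pos g.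
Proof.
  intros hg x y t hx hy ht.
  assert (hopp : convex_pos (fun x => - g x)).
  { apply convex_pos_of_strictly; intros x' y' t' hx' hy' hxy' ht'.
    specialize (hg x' y' t' hx' hy' hxy' ht'); lra. }
  specialize (hopp x y t hx hy ht); simpl in hopp; lra.
Qed.

Lemma strictly_convex_midpoint (g : R -> R) x y :
  strictly_convex_pos g -> 0 < x -> 0 < y -> x <> y ->
  g ((x + y) / 2) < (g x + g y) / 2.
Proof.
  intros hg hx hy hxy.
  replace ((x + y) / 2) with (/ 2 * x + (1 - / 2) * y) by field.
  replace ((g x + g y) / 2) with (/ 2 * g x + (1 - / 2) * g y) by field.
  apply hg; auto; lra.
Qed.

Lemma strictly_concave_midpoint (g : R -> R) x y :
  strictly_concave_pos g -> 0 < x -> 0 < y -> x <> y ->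
  (g x + g y) / 2 < g ((x + y) / 2).
Proof.
  intros hg hx hy hxy.
  replace ((x + y) / 2) with (/ 2 * x + (1 - / 2) * y) by field.
  replace ((g x + g y) / 2) with (/ 2 * g x + (1 - / 2) * g y) by field.
  apply hg; auto; lra.
Qed.

Section SecondDerivative.

Variables g g' g'' : R -> R.
Hypothesis g_deriv : forall x, 0 < x -> is_derive g x (g' x).
Hypothesis g'_deriv : forall x, 0 < x -> is_derive g' x (g'' x).

Lemma strictly_convex_of_deriv2_pos :
  (forall x, 0 < x -> 0 < g'' x) -> strictly_convex_pos g.
Proof.
  intros hpos.
  assert (g'_incr : forall x y, 0 < x -> x < y -> g' x < g' y).
  { intros x y hx hxy.
    apply (incr_function g' (Finite 0) p_infty g''); simpl; auto; intros; apply Rlt_gt; auto. }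
  assert (key : forall x y t, 0 < x -> x < y -> 0 < t < 1 ->
            g (t * x + (1 - t) * y) < t * g x + (1 - t) * g y).
  { intros x y t hx hxy ht.
    set (z := t * x + (1 - t) * y).
    assert (hxz : x < z) by (unfold z; nra).
    assert (hzy : z < y) by (unfold z; nra).
    (* by the mean value theorem the slope of g on [x, z] is below its slope on [z, y] *)
    destruct (MVT_cor2 g g' x z hxz) as [p [hpxz hp]].
    { intros; apply is_derive_Reals, g_deriv; lra. }
    destruct (MVT_cor2 g g' z y hzy) as [q [hqzy hq]].
    { intros; apply is_derive_Reals, g_deriv; lra. }
    assert (hpq : g' p < g' q) by (apply g'_incr; lra).
    replace (z - x) with ((1 - t) * (y - x)) in hpxz by (unfold z; ring).
    replace (y - z) with (t * (y - x)) in hqzy by (unfold z; ring).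
    assert (0 < t * (1 - t) * (y - x) * (g' q - g' p)).
    { repeat apply Rmult_lt_0_compat; lra. }
    assert (t * g x + (1 - t) * g y - g z = t * (1 - t) * (y - x) * (g' q - g' p)).
    { replace (g x) with (g z - g' p * ((1 - t) * (y - x))) by lra.
      replace (g y) with (g z + g' q * (t * (y - x))) by lra. ring. }
    lra. }
  intros x y t hx hy hxy ht.
  destruct (Rtotal_order x y) as [h | [h | h]]; [auto | contradiction |].
  replace (t * x + (1 - t) * y) with ((1 - t) * y + (1 - (1 - t)) * x) by ring.
  replace (t * g x + (1 - t) * g y) with ((1 - t) * g y + (1 - (1 - t)) * g x) by ring.
  apply key; lra.
Qed.

End SecondDerivative.

Lemma strictly_concave_of_deriv2_neg (g g' g'' : R -> R) :
  (forall x, 0 < x -> is_derive g x (g' x)) ->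
  (forall x, 0 < x -> is_derive g' x (g'' x)) ->
  (forall x, 0 < x -> g'' x < 0) -> strictly_concave_pos g.
Proof.
  intros dg dg' hneg; apply strictly_concave_opp.
  apply (strictly_convex_of_deriv2_pos _ (fun x => - g' x) (fun x => - g'' x)).
  - intros x hx; apply (is_derive_opp g), dg, hx.
  - intros x hx; apply (is_derive_opp g'), dg', hx.
  - intros x hx; specialize (hneg x hx); lra.
Qed.

Lemma Series_pos (u : nat -> R) n0 :
  (forall n, 0 <= u n) -> 0 < u n0 -> ex_series u -> 0 < Series u.
Proof.
  intros hu hn0 hex.
  rewrite (Series_incr_n u (S n0)) by (lia || exact hex); simpl pred.
  assert (hhead : u n0 <= sum_f_R0 u n0).
  { destruct n0 as [| m]; simpl; [lra |].
    assert (0 <= sum_f_R0 u m) by (apply cond_pos_sum; exact hu); lra. }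
  assert (htail : 0 <= Series (fun k => u (S n0 + k)%nat)).
  { rewrite <- (Rmult_0_l (Series (fun k => u (S n0 + k)%nat))), <- Series_scal_l.
    apply Series_le; [intros n; rewrite Rmult_0_l; split; [lra | apply hu] |].
    apply ex_series_incr_n, hex. }
  lra.
Qed.

Lemma Series_lt (u v : nat -> R) n0 :
  (forall n, u n <= v n) -> u n0 < v n0 -> ex_series u -> ex_series v ->
  Series u < Series v.
Proof.
  intros hle hlt hu hv.
  assert (hex : ex_series (fun n => v n - u n)) by (apply (ex_series_minus v u); assumption).
  assert (Series (fun n => v n - u n) = Series v - Series u) by (apply Series_minus; assumption).
  assert (0 < Series (fun n => v n - u n)).
  { apply (Series_pos _ n0); [intros n; specialize (hle n); lra | lra | exact hex]. }
  lra.
Qed.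

Lemma PSeries_pos (a : nat -> R) x :
  (forall n, 0 <= a n) -> 0 < a O -> 0 <= x -> ex_pseries a x -> 0 < PSeries a x.
Proof.
  intros ha ha0 hx hex; apply (Series_pos _ O).
  - intros n; apply Rmult_le_pos; [apply ha | apply pow_le, hx].
  - simpl; rewrite Rmult_1_r; exact ha0.
  - apply ex_pseries_R, hex.
Qed.

Lemma Rpower_am_gm_strict p q t : 0 < p -> 0 < q -> 0 < t < 1 -> p <> q ->
  Rpower p t * Rpower q (1 - t) < t * p + (1 - t) * q.
Proof.
  intros hp hq ht hpq.
  set (m := t * ln p + (1 - t) * ln q).
  assert (hG : Rpower p t * Rpower q (1 - t) = exp m)
    by (unfold Rpower, m; rewrite <- exp_plus; f_equal; ring).
  assert (ep : p = exp m * exp (ln p - m))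
    by (rewrite <- exp_plus, <- (exp_ln p) at 1 by exact hp; f_equal; ring).
  assert (eq' : q = exp m * exp (ln q - m))
    by (rewrite <- exp_plus, <- (exp_ln q) at 1 by exact hq; f_equal; ring).
  assert (hne : ln p - m <> 0).
  { unfold m; intro h; apply hpq, ln_inv; [exact hp | exact hq | nra]. }
  (* tangent line of exp at 0, strict off 0; the weighted deviations from m cancel *)
  pose proof (exp_ineq1 (ln p - m) hne) as hlp.
  pose proof (exp_ineq1_le (ln q - m)) as hlq.
  assert (hdev : t * (ln p - m) + (1 - t) * (ln q - m) = 0) by (unfold m; ring).
  assert (hmean : 1 < t * exp (ln p - m) + (1 - t) * exp (ln q - m)) by nra.
  pose proof (exp_pos m).
  rewrite hG, ep, eq'; nra.
Qed.

Lemma Rpower_am_gm p q t : 0 < p -> 0 < q -> 0 <= t <= 1 ->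
  Rpower p t * Rpower q (1 - t) <= t * p + (1 - t) * q.
Proof.
  intros hp hq ht.
  destruct (Req_dec t 0) as [-> | ht0].
  { rewrite Rminus_0_r, Rpower_O, Rpower_1 by assumption; lra. }
  destruct (Req_dec t 1) as [-> | ht1].
  { rewrite Rminus_diag, Rpower_O, Rpower_1 by assumption; lra. }
  destruct (Req_dec p q) as [<- | hpq].
  - rewrite <- Rpower_plus, Rplus_minus, Rpower_1 by exact hp; lra.
  - apply Rlt_le, Rpower_am_gm_strict; auto; lra.
Qed.

Lemma sqrt_mult_exp_ln p q : 0 < p -> 0 < q ->
  sqrt (p * q) = exp (/ 2 * ln p + (1 - / 2) * ln q).
Proof.
  intros hp hq; rewrite <- sqrt_square by apply Rlt_le, exp_pos.
  f_equal; rewrite <- exp_plus, <- (exp_ln p) at 1 by exact hp.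
  rewrite <- (exp_ln q) at 1 by exact hq; rewrite <- exp_plus; f_equal; field.
Qed.

Section HolderSeries.

Variables (x y : nat -> R) (t : R).
Hypotheses (x_pos : forall n, 0 < x n) (y_pos : forall n, 0 < y n).
Hypotheses (x_ex : ex_series x) (y_ex : ex_series y).

Let X := Series x.
Let Y := Series y.
Let G := Rpower X t * Rpower Y (1 - t).

Let X_pos : 0 < X.
Proof. apply (Series_pos x O); auto; intros n; apply Rlt_le, x_pos. Qed.

Let Y_pos : 0 < Y.
Proof. apply (Series_pos y O); auto; intros n; apply Rlt_le, y_pos. Qed.

Let holder_term n :
  Rpower (x n) t * Rpower (y n) (1 - t) = G * (Rpower (x n / X) t * Rpower (y n / Y) (1 - t)).
Proof.
  assert (hx : 0 < x n / X) by (apply Rdiv_lt_0_compat; auto).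
  assert (hy : 0 < y n / Y) by (apply Rdiv_lt_0_compat; auto).
  replace (x n) with (x n / X * X) at 1 by (field; lra).
  replace (y n) with (y n / Y * Y) at 1 by (field; lra).
  unfold G; rewrite <- !Rpower_mult_distr by assumption; ring.
Qed.

Let bound n := G * (t * (x n / X) + (1 - t) * (y n / Y)).

Let bound_ex : ex_series bound.
Proof.
  apply (ex_series_ext (fun n => x n * (G * t / X) + y n * (G * (1 - t) / Y))).
  { intros n; unfold bound; simpl; field; lra. }
  apply (ex_series_plus (V := R_NormedModule)); apply ex_series_scal_r; assumption.
Qed.

Let bound_Series : Series bound = G.
Proof.
  rewrite (Series_ext _ (fun n => x n * (G * t / X) + y n * (G * (1 - t) / Y)))
    by (intros n; unfold bound; field; lra).
  rewrite Series_plus, !Series_scal_r by (apply ex_series_scal_r; assumption).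
  fold X Y; field; lra.
Qed.

Let term_le_bound n : 0 <= t <= 1 -> Rpower (x n) t * Rpower (y n) (1 - t) <= bound n.
Proof.
  intros ht; rewrite holder_term; unfold bound.
  apply Rmult_le_compat_l; [apply Rmult_le_pos; apply Rlt_le, exp_pos |].
  apply Rpower_am_gm; [apply Rdiv_lt_0_compat; auto .. | exact ht].
Qed.

Lemma Series_holder :
  0 <= t <= 1 ->
  Series (fun n => Rpower (x n) t * Rpower (y n) (1 - t)) <= Rpower X t * Rpower Y (1 - t).
Proof.
  intros ht; fold G; rewrite <- bound_Series.
  apply Series_le; [| exact bound_ex]; intros n; split.
  - apply Rmult_le_pos; apply Rlt_le, exp_pos.
  - apply term_le_bound, ht.
Qed.

Lemma Series_holder_strict n0 :
  0 < t < 1 -> x n0 * Y <> y n0 * X ->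
  Series (fun n => Rpower (x n) t * Rpower (y n) (1 - t)) < Rpower X t * Rpower Y (1 - t).
Proof.
  intros ht hn0; fold G; rewrite <- bound_Series.
  assert (hle : forall n, Rpower (x n) t * Rpower (y n) (1 - t) <= bound n)
    by (intros n; apply term_le_bound; lra).
  apply (Series_lt _ _ n0 hle); [| | exact bound_ex].
  - rewrite holder_term; unfold bound.
    apply Rmult_lt_compat_l; [apply Rmult_lt_0_compat; apply exp_pos |].
    apply Rpower_am_gm_strict; [apply Rdiv_lt_0_compat; auto .. | exact ht |].
    intro e; apply hn0.
    replace (x n0 * Y) with (x n0 / X * (X * Y)) by (field; lra).
    replace (y n0 * X) with (y n0 / Y * (X * Y)) by (field; lra).
    rewrite e; reflexivity.
  - apply (ex_series_le (V := R_CompleteNormedModule) _ bound); [| exact bound_ex].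
    intros n; rewrite Rabs_pos_eq; [apply hle |].
    apply Rmult_le_pos; apply Rlt_le, exp_pos.
Qed.

End HolderSeries.

Lemma ln_Rpower_mult A B t s : ln (Rpower A t * Rpower B s) = t * ln A + s * ln B.
Proof. unfold Rpower; rewrite <- exp_plus, ln_exp; reflexivity. Qed.

Section PositivePowerSeries.

Variable a : nat -> R.
Hypothesis a_pos : forall n, 0 < a n.
Hypothesis a_entire : CV_radius a = p_infty.

Lemma ex_pseries_entire x : ex_pseries a x.
Proof. apply CV_radius_inside; rewrite a_entire; exact I. Qed.

Lemma PSeries_entire_pos x : 0 <= x -> 0 < PSeries a x.
Proof.
  intros hx; apply PSeries_pos; auto using ex_pseries_entire.
  intros n; apply Rlt_le, a_pos.
Qed.

Let term_holder_form u v t n :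
  a n * exp (t * u + (1 - t) * v) ^ n = Rpower (a n * exp u ^ n) t * Rpower (a n * exp v ^ n) (1 - t).
Proof.
  assert (hexp : forall z, exp z ^ n = exp (INR n * z))
    by (intros z; rewrite <- (exp_ln (exp z ^ n)) by (apply pow_lt, exp_pos);
        rewrite ln_pow, ln_exp by apply exp_pos; reflexivity).
  unfold Rpower; rewrite !hexp, <- !exp_plus, !ln_mult, !ln_exp by (apply a_pos || apply exp_pos).
  rewrite <- (exp_ln (a n)) at 1 by apply a_pos; rewrite <- exp_plus; f_equal; ring.
Qed.

Let ex_series_exp u : ex_series (fun n => a n * exp u ^ n).
Proof. apply ex_pseries_R, ex_pseries_entire. Qed.

Let term_pos u n : 0 < a n * exp u ^ n.
Proof. apply Rmult_lt_0_compat; [apply a_pos | apply pow_lt, exp_pos]. Qed.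

Lemma ln_PSeries_exp_convex u v t : 0 <= t <= 1 ->
  ln (PSeries a (exp (t * u + (1 - t) * v))) <=
  t * ln (PSeries a (exp u)) + (1 - t) * ln (PSeries a (exp v)).
Proof.
  intros ht; rewrite <- ln_Rpower_mult.
  apply ln_le; [apply PSeries_entire_pos, Rlt_le, exp_pos |].
  unfold PSeries; rewrite (Series_ext _ _ (term_holder_form u v t)).
  apply Series_holder; auto.
Qed.

Lemma ln_PSeries_exp_convex_strict u v t : 0 < t < 1 -> u <> v ->
  ln (PSeries a (exp (t * u + (1 - t) * v))) <
  t * ln (PSeries a (exp u)) + (1 - t) * ln (PSeries a (exp v)).
Proof.
  intros ht huv; rewrite <- ln_Rpower_mult.
  apply ln_increasing; [apply PSeries_entire_pos, Rlt_le, exp_pos |].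
  unfold PSeries; rewrite (Series_ext _ _ (term_holder_form u v t)).
  set (A := Series (fun n => a n * exp u ^ n)); set (B := Series (fun n => a n * exp v ^ n)).
  (* the two terms of index 0 differ unless A = B, and then those of index 1 differ *)
  destruct (Req_dec A B) as [hAB | hAB].
  - apply (Series_holder_strict _ _ _ (term_pos u) (term_pos v) (ex_series_exp u) (ex_series_exp v) 1%nat ht).
    fold A B; rewrite hAB; simpl; rewrite !Rmult_1_r; intro e.
    assert (hB : 0 < B) by apply (PSeries_entire_pos (exp v)), Rlt_le, exp_pos.
    apply huv, exp_inv, (Rmult_eq_reg_l (a 1%nat * B)); [lra |].
    apply Rgt_not_eq, Rmult_lt_0_compat; [apply a_pos | exact hB].
  - apply (Series_holder_strict _ _ _ (term_pos u) (term_pos v) (ex_series_exp u) (ex_series_exp v) O ht).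
    fold A B; simpl; rewrite !Rmult_1_r; intro e.
    apply hAB, (Rmult_eq_reg_l (a O)); [lra | apply Rgt_not_eq, a_pos].
Qed.

End PositivePowerSeries.

Lemma pos_of_increasing_vanishing_at_0 (h : R -> R) :
  (forall x y, 0 < x -> x < y -> h x < h y) ->
  (forall eps, 0 < eps -> exists delta, 0 < delta /\ forall e, 0 < e < delta -> Rabs (h e) < eps) ->
  forall x, 0 < x -> 0 < h x.
Proof.
  intros hincr hlim x hx.
  destruct (Rlt_or_le 0 (h x)) as [hpos | hle]; [exact hpos | exfalso].
  assert (hhalf : h (x / 2) < h x) by (apply hincr; lra).
  destruct (hlim (- h (x / 2))) as [delta [hdelta hsmall]]; [lra |].
  set (e := Rmin delta (x / 2) / 2).
  assert (he : 0 < e < delta /\ e < x / 2)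
    by (unfold e; pose proof (Rmin_l delta (x / 2)); pose proof (Rmin_r delta (x / 2));
        assert (0 < Rmin delta (x / 2)) by (apply Rmin_pos; lra); lra).
  assert (h e < h (x / 2)) by (apply hincr; lra).
  specialize (hsmall e (proj1 he)); apply Rabs_def2 in hsmall; lra.
Qed.

Section Turan.

Variables (F F1 F2 : R -> R) (a k : R).
Hypothesis k_nonneg : 0 <= k.
Hypothesis F_deriv : forall y, is_derive F y (F1 y).
Hypothesis F1_deriv : forall y, is_derive F1 y (F2 y).
Hypothesis F1_pos : forall y, 0 < y -> 0 < F1 y.
Hypothesis F_ode : forall y, y * F2 y = a * F y - k * F1 y.

(* equal to [y (F1^2 - F F2)] by the ODE, but differentiable knowing only F1 and F2 *)
Let phi y := y * F1 y ^ 2 + k * F y * F1 y - a * F y ^ 2.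
Let phi' y :=
  F1 y ^ 2 + 2 * y * F1 y * F2 y + k * (F1 y ^ 2 + F y * F2 y) - 2 * a * F y * F1 y.

Let phi_deriv y : is_derive phi y (phi' y).
Proof.
  unfold phi, phi'; auto_derive.
  - repeat split; eexists; eauto.
  - change (Derive (fun x => F x) y) with (Derive F y).
    change (Derive (fun x => F1 x) y) with (Derive F1 y).
    rewrite (is_derive_unique _ _ _ (F_deriv y)), (is_derive_unique _ _ _ (F1_deriv y)); ring.
Qed.

Let phi_turan y : phi y = y * (F1 y ^ 2 - F y * F2 y).
Proof.
  replace (y * (F1 y ^ 2 - F y * F2 y)) with (y * F1 y ^ 2 - F y * (y * F2 y)) by ring.
  rewrite F_ode; unfold phi; ring.
Qed.

(* [y^k] is an integrating factor: by the ODE, [y phi' + k phi = y F1^2] *)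
Let Phi_deriv y : 0 < y ->
  is_derive (fun y => Rpower y k * phi y) y (Rpower y k * F1 y ^ 2).
Proof.
  intros hy.
  assert (hkey : y * phi' y + k * phi y = y * F1 y ^ 2).
  { apply Rminus_diag_uniq.
    transitivity ((2 * y * F1 y + k * F y) * (y * F2 y - (a * F y - k * F1 y)));
      [unfold phi, phi'; ring | rewrite F_ode; ring]. }
  replace (Rpower y k * F1 y ^ 2) with (k * Rpower y (k - 1) * phi y + Rpower y k * phi' y).
  - apply is_derive_Reals, (derivable_pt_lim_mult (fun y => Rpower y k) phi).
    + apply derivable_pt_lim_power, hy.
    + apply is_derive_Reals, phi_deriv.
  - unfold Rminus; rewrite Rpower_plus, Rpower_Ropp, Rpower_1 by exact hy.
    apply (Rmult_eq_reg_l y); [| lra].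
    transitivity (Rpower y k * (y * phi' y + k * phi y)); [field; lra |].
    rewrite hkey; ring.
Qed.

Let phi_0 : phi 0 = 0.
Proof.
  assert (h : k * F1 0 = a * F 0) by (pose proof (F_ode 0); lra).
  unfold phi; replace (k * F 0 * F1 0) with (F 0 * (k * F1 0)) by ring; rewrite h; ring.
Qed.

Let Phi_vanish_at_0 eps : 0 < eps ->
  exists delta, 0 < delta /\ forall e, 0 < e < delta -> Rabs (Rpower e k * phi e) < eps.
Proof.
  intros heps.
  assert (hcont : continuity_pt phi 0)
    by (apply derivable_continuous_pt; exists (phi' 0); apply is_derive_Reals, phi_deriv).
  destruct (hcont eps heps) as [alpha [halpha hclose]].
  exists (Rmin alpha 1); split; [apply Rmin_pos; lra |].
  intros e [he0 he1].
  assert (hRk : 0 < Rpower e k <= 1).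
  { split; [apply exp_pos |].
    apply Rle_trans with (Rpower 1 k).
    - apply Rle_Rpower_l; [exact k_nonneg |]; pose proof (Rmin_r alpha 1); lra.
    - unfold Rpower; rewrite ln_1, Rmult_0_r, exp_0; lra. }
  assert (hphi : Rabs (phi e) < eps).
  { specialize (hclose e); simpl in hclose; unfold R_dist in hclose.
    rewrite phi_0, !Rminus_0_r in hclose; apply hclose.
    split; [split; [exact I | lra] |].
    rewrite Rabs_pos_eq; [| lra]; pose proof (Rmin_l alpha 1); lra. }
  rewrite Rabs_mult, (Rabs_pos_eq (Rpower e k)) by lra.
  pose proof (Rabs_pos (phi e)); nra.
Qed.

Lemma turan_inequality x : 0 < x -> F x * F2 x < F1 x ^ 2.
Proof.
  intros hx.
  assert (hPhi : 0 < Rpower x k * phi x).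
  { apply (pos_of_increasing_vanishing_at_0 (fun y => Rpower y k * phi y)); auto.
    intros y z hy hyz.
    apply (incr_function (fun y => Rpower y k * phi y) (Finite 0) p_infty
      (fun y => Rpower y k * F1 y ^ 2)); [| | exact hy | exact hyz | exact I].
    - intros w hw _; apply Phi_deriv, hw.
    - intros w hw _; apply Rmult_lt_0_compat; [apply exp_pos | apply pow_lt, F1_pos, hw]. }
  rewrite phi_turan in hPhi.
  assert (hD : 0 < x * (F1 x ^ 2 - F x * F2 x)).
  { apply (Rmult_lt_reg_l (Rpower x k)); [apply exp_pos | rewrite Rmult_0_r; exact hPhi]. }
  assert (0 < F1 x ^ 2 - F x * F2 x) by (apply (Rmult_lt_reg_l x); lra).
  lra.
Qed.

End Turan.

Lemma poch_pos k n : 0 < k -> 0 < poch k n.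
Proof.
  intros hk; induction n as [| n IH]; simpl; [lra |].
  apply Rmult_lt_0_compat; [exact IH | pose proof (pos_INR n); lra].
Qed.

Section Bessel.

Variables c k : R.
Hypothesis c_neg : c < 0.
Hypothesis k_pos : 0 < k.

Local Notation b := (bcoef c k).
Local Notation b' := (PS_derive (bcoef c k)).
Local Notation b'' := (PS_derive (PS_derive (bcoef c k))).

Lemma bcoef_pos n : 0 < b n.
Proof.
  unfold bcoef; apply Rdiv_lt_0_compat; [apply pow_lt; lra |].
  apply Rmult_lt_0_compat; [apply INR_fact_lt_0 | apply poch_pos, k_pos].
Qed.

Lemma bcoef_succ n : b (S n) = - c / 4 / (INR (S n) * (k + INR n)) * b n.
Proof.
  unfold bcoef; rewrite fact_simpl, mult_INR; simpl poch; simpl pow.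
  pose proof (INR_fact_lt_0 n); pose proof (poch_pos k n k_pos); pose proof (pos_INR n).
  rewrite S_INR; field; repeat split; lra.
Qed.

Lemma PS_derive_bcoef n : b' n = - c / 4 / (k + INR n) * b n.
Proof.
  unfold PS_derive; rewrite bcoef_succ.
  pose proof (pos_INR n); rewrite S_INR; field; lra.
Qed.

Lemma PS_derive2_bcoef n : b'' n = - c / 4 / (k + INR n + 1) * b' n.
Proof.
  unfold PS_derive at 1; rewrite PS_derive_bcoef; unfold PS_derive.
  pose proof (pos_INR n); rewrite !S_INR; field; lra.
Qed.

Lemma PS_derive_bcoef_pos n : 0 < b' n.
Proof.
  rewrite PS_derive_bcoef; pose proof (pos_INR n); pose proof (bcoef_pos n).
  apply Rmult_lt_0_compat; [apply Rdiv_lt_0_compat |]; lra.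
Qed.

Lemma PS_derive2_bcoef_pos n : 0 < b'' n.
Proof.
  rewrite PS_derive2_bcoef; pose proof (pos_INR n); pose proof (PS_derive_bcoef_pos n).
  apply Rmult_lt_0_compat; [apply Rdiv_lt_0_compat |]; lra.
Qed.

Lemma CV_radius_bcoef : CV_radius b = p_infty.
Proof.
  apply CV_radius_infinite_DAlembert; [intros n; apply Rgt_not_eq, bcoef_pos |].
  apply (is_lim_seq_ext (fun n => - c / 4 * / (INR (S n) * (k + INR n)))).
  { intros n; rewrite bcoef_succ; pose proof (bcoef_pos n).
    pose proof (pos_INR n); pose proof (lt_0_INR (S n) (Nat.lt_0_succ n)).
    assert (hd : 0 < INR (S n) * (k + INR n)) by (apply Rmult_lt_0_compat; lra).
    replace (- c / 4 / (INR (S n) * (k + INR n)) * b n / b n)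
      with (- c / 4 * / (INR (S n) * (k + INR n))) by (field; repeat split; lra).
    symmetry; apply Rabs_pos_eq, Rlt_le, Rmult_lt_0_compat; [lra | apply Rinv_0_lt_compat, hd]. }
  replace (Finite 0) with (Rbar_mult (- c / 4) (Rbar_inv p_infty)) by (simpl; f_equal; ring).
  apply is_lim_seq_scal_l, is_lim_seq_inv; [| discriminate].
  apply (is_lim_seq_mult _ _ p_infty p_infty); [| | reflexivity].
  - apply (is_lim_seq_incr_1 INR), is_lim_seq_INR.
  - apply (is_lim_seq_plus _ _ k p_infty); [apply is_lim_seq_const | apply is_lim_seq_INR | reflexivity].
Qed.

Local Notation F := (fB c k).
Local Notation F1 := (PSeries (PS_derive (bcoef c k))).
Local Notation F2 := (PSeries (PS_derive (PS_derive (bcoef c k)))).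

Lemma CV_radius_derive_bcoef : CV_radius b' = p_infty.
Proof. rewrite CV_radius_derive; exact CV_radius_bcoef. Qed.

Lemma CV_radius_derive2_bcoef : CV_radius b'' = p_infty.
Proof. rewrite !CV_radius_derive; exact CV_radius_bcoef. Qed.

Lemma fB_derive y : is_derive F y (F1 y).
Proof. apply is_derive_PSeries; rewrite CV_radius_bcoef; exact I. Qed.

Lemma fB_derive2 y : is_derive F1 y (F2 y).
Proof. apply is_derive_PSeries; rewrite CV_radius_derive_bcoef; exact I. Qed.

Lemma fB_pos y : 0 <= y -> 0 < F y.
Proof. apply PSeries_entire_pos; [exact bcoef_pos | exact CV_radius_bcoef]. Qed.

Lemma fB_derive_pos y : 0 <= y -> 0 < F1 y.
Proof. apply PSeries_entire_pos; [exact PS_derive_bcoef_pos | exact CV_radius_derive_bcoef]. Qed.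

Lemma fB_derive2_pos y : 0 <= y -> 0 < F2 y.
Proof. apply PSeries_entire_pos; [exact PS_derive2_bcoef_pos | exact CV_radius_derive2_bcoef]. Qed.

Lemma fB_ode y : y * F2 y = - c / 4 * F y - k * F1 y.
Proof.
  (* [PS_decr_1 (fun n => n b'_n)] is [b''] by definition *)
  rewrite <- (PSeries_decr_1_aux (fun n => INR n * b' n)) by (simpl; ring).
  rewrite (PSeries_ext _ (PS_minus (PS_scal (- c / 4) b) (PS_scal k b'))).
  - rewrite PSeries_minus, !PSeries_scal; [reflexivity | ..];
      apply ex_pseries_scal; try (apply Rmult_comm);
      apply ex_pseries_entire; auto using CV_radius_bcoef, CV_radius_derive_bcoef.
  - intros n; unfold PS_minus, PS_scal; simpl.
    change (INR n * b' n = - c / 4 * b n + - (k * b' n)).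
    rewrite PS_derive_bcoef; pose proof (pos_INR n); field; lra.
Qed.

Lemma fB_derive_gt_derive2 r x : k > -1 - c * r / 4 -> 0 < x < r ->
  (r - x) * F2 x < F1 x.
Proof.
  intros hkr hx.
  assert (hex1 : ex_pseries b' x)
    by apply ex_pseries_entire, CV_radius_derive_bcoef.
  assert (hex2 : ex_pseries (PS_scal (r - x) b'') x).
  { apply ex_pseries_scal; [apply Rmult_comm |].
    apply ex_pseries_entire, CV_radius_derive2_bcoef. }
  (* the coefficients are [b' n (1 - (r - x) (-c/4) / (k + n + 1))],
     and [(r - x) (-c/4) < k + 1] *)
  assert (hcoef : forall n, 0 < PS_minus b' (PS_scal (r - x) b'') n).
  { intros n; unfold PS_minus, PS_scal; simpl.
    change (0 < b' n + - ((r - x) * b'' n)).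
    rewrite PS_derive2_bcoef; pose proof (pos_INR n); pose proof (PS_derive_bcoef_pos n).
    assert (hsmall : (r - x) * (- c / 4) < k + INR n + 1) by nra.
    replace (b' n + - ((r - x) * (- c / 4 / (k + INR n + 1) * b' n)))
      with (b' n * (k + INR n + 1 - (r - x) * (- c / 4)) / (k + INR n + 1)) by (field; lra).
    apply Rdiv_lt_0_compat; [apply Rmult_lt_0_compat |]; lra. }
  apply Rlt_0_minus; rewrite <- PSeries_scal, <- PSeries_minus by assumption.
  apply PSeries_pos; [intros n; apply Rlt_le, hcoef | apply hcoef | lra |].
  apply ex_pseries_minus; assumption.
Qed.

Lemma fB_log_convex_in_log r :
  0 < r ->
  convex_pos (fun t => ln (F (r * exp (- t)))) /\
  forall x y, 0 < x -> 0 < y ->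
    F (sqrt (x * y)) <= sqrt (F x * F y) /\
    (F (sqrt (x * y)) = sqrt (F x * F y) <-> x = y).
Proof.
  intros hr.
  assert (hexp : forall t, r * exp (- t) = exp (ln r - t))
    by (intros t; unfold Rminus; rewrite exp_plus, exp_ln by exact hr; reflexivity).
  split.
  - intros x y t _ _ ht; rewrite !hexp.
    replace (ln r - (t * x + (1 - t) * y)) with (t * (ln r - x) + (1 - t) * (ln r - y)) by ring.
    apply ln_PSeries_exp_convex; auto using bcoef_pos, CV_radius_bcoef.
  - intros x y hx hy.
    rewrite <- (exp_ln x), <- (exp_ln y) by assumption.
    generalize (ln x) (ln y); clear x y hx hy; intros u v.
    assert (hF : forall w, 0 < F (exp w)) by (intros w; apply fB_pos, Rlt_le, exp_pos).
    rewrite !sqrt_mult_exp_ln, !ln_exp by (apply exp_pos || apply hF).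
    rewrite <- (exp_ln (F (exp _))) by apply hF.
    apply le_with_equality_case.
    + intros huv; apply exp_increasing, ln_PSeries_exp_convex_strict;
        auto using bcoef_pos, CV_radius_bcoef; [lra |].
      intros ->; apply huv; reflexivity.
    + intros e; rewrite (exp_inv _ _ e); replace (/ 2 * v + (1 - / 2) * v) with v by field.
      f_equal; ring.
Qed.

Lemma fB_log_concave :
  concave_pos (fun x => ln (F x)) /\
  forall x y, 0 < x -> 0 < y ->
    sqrt (F x * F y) <= F ((x + y) / 2) /\
    (sqrt (F x * F y) = F ((x + y) / 2) <-> x = y).
Proof.
  assert (hconc : strictly_concave_pos (fun x => ln (F x))).
  { apply (strictly_concave_of_deriv2_neg _ (fun x => F1 x / F x)
      (fun x => (F2 x * F x - F1 x * F1 x) / F x ^ 2)).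
    - intros x hx; auto_derive.
      + split; [eexists; apply fB_derive | split; [apply fB_pos; lra | exact I]].
      + change (Derive (fun x => F x) x) with (Derive F x).
        rewrite (is_derive_unique _ _ _ (fB_derive x)); field.
        apply Rgt_not_eq, fB_pos; lra.
    - intros x hx; apply is_derive_div; [apply fB_derive2 | apply fB_derive |].
      apply Rgt_not_eq, fB_pos; lra.
    - intros x hx; apply Rdiv_neg_pos; [| apply pow_lt, fB_pos; lra].
      pose proof (turan_inequality F F1 F2 (- c / 4) k ltac:(lra)
        fB_derive fB_derive2 (fun y hy => fB_derive_pos y (Rlt_le _ _ hy)) fB_ode x hx).
      lra. }
  split; [apply concave_pos_of_strictly, hconc |].
  intros x y hx hy.
  rewrite <- (exp_ln (F ((x + y) / 2))), sqrt_mult_exp_ln by (apply fB_pos; lra).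
  apply le_with_equality_case.
  - intros hxy; apply exp_increasing.
    pose proof (strictly_concave_midpoint _ x y hconc hx hy hxy); lra.
  - intros <-; replace ((x + x) / 2) with x by field; f_equal; field.
Qed.

Lemma fB_convex :
  convex_pos F /\
  forall x y, 0 < x -> 0 < y ->
    F ((x + y) / 2) <= (F x + F y) / 2 /\
    (F ((x + y) / 2) = (F x + F y) / 2 <-> x = y).
Proof.
  assert (hconv : strictly_convex_pos F).
  { apply (strictly_convex_of_deriv2_pos F F1 F2); intros x hx;
      [apply fB_derive | apply fB_derive2 | apply fB_derive2_pos; lra]. }
  split; [apply convex_pos_of_strictly, hconv |].
  intros x y hx hy; apply le_with_equality_case.
  - apply strictly_convex_midpoint; assumption.
  - intros <-; replace ((x + x) / 2) with x by field; field.
Qed.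

Lemma fB_concave_in_exp_reparam r :
  0 < r -> k > -1 - c * r / 4 ->
  concave_pos (fun t => F (r * (1 - exp (- t)))) /\
  forall x y, 0 < x < r -> 0 < y < r ->
    (F x + F y) / 2 <= F (r - sqrt ((r - x) * (r - y))) /\
    ((F x + F y) / 2 = F (r - sqrt ((r - x) * (r - y))) <-> x = y).
Proof.
  intros hr hkr.
  set (T := fun t => r * (1 - exp (- t))).
  assert (hT : forall t, 0 < t -> 0 < T t < r).
  { intros t ht; unfold T; assert (exp (- t) < 1) by (rewrite <- exp_0; apply exp_increasing; lra).
    pose proof (exp_pos (- t)); split; nra. }
  assert (hconc : strictly_concave_pos (fun t => F (T t))).
  { apply (strictly_concave_of_deriv2_neg _ (fun t => (r - T t) * F1 (T t))
      (fun t => (r - T t) * ((r - T t) * F2 (T t) - F1 (T t)))); intros t ht; unfold T.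
    - auto_derive; [repeat split; eexists; apply fB_derive |].
      change (Derive (fun x => F x)) with (Derive F).
      rewrite (is_derive_unique _ _ _ (fB_derive _)); unfold Rminus; ring.
    - auto_derive; [repeat split; eexists; apply fB_derive2 |].
      change (Derive (fun x => F1 x)) with (Derive F1).
      rewrite (is_derive_unique _ _ _ (fB_derive2 _)); unfold Rminus; ring.
    - specialize (hT t ht); unfold T in hT.
      pose proof (fB_derive_gt_derive2 r _ hkr hT).
      rewrite <- (Rmult_0_r (r - r * (1 - exp (- t)))); apply Rmult_lt_compat_l; lra. }
  split; [apply concave_pos_of_strictly, hconc |].
  intros x y hx hy.
  assert (hTinv : forall z, 0 < z < r -> 0 < ln r - ln (r - z) /\ T (ln r - ln (r - z)) = z).
  { intros z hz; split.
    - assert (ln (r - z) < ln r) by (apply ln_increasing; lra); lra.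
    - unfold T; rewrite Ropp_minus_distr; unfold Rminus at 2.
      rewrite exp_plus, exp_Ropp, !exp_ln by lra; field; lra. }
  destruct (hTinv x hx) as [hs hxs]; destruct (hTinv y hy) as [hu hyu].
  set (s := ln r - ln (r - x)) in *; set (u := ln r - ln (r - y)) in *.
  assert (hmid : T ((s + u) / 2) = r - sqrt ((r - x) * (r - y))).
  { unfold T; rewrite sqrt_mult_exp_ln, Rmult_minus_distr_l, Rmult_1_r by lra.
    f_equal; rewrite <- (exp_ln r) at 1 by exact hr; rewrite <- exp_plus.
    f_equal; unfold s, u; field. }
  rewrite <- hmid; apply le_with_equality_case.
  - intros hxy; rewrite <- hxs, <- hyu at 1.
    apply (strictly_concave_midpoint _ s u hconc hs hu).
    intros e; apply hxy; rewrite <- hxs, <- hyu, e; reflexivity.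
  - intros <-; replace u with s by reflexivity.
    replace ((s + s) / 2) with s by field; rewrite hxs; field.
Qed.

End Bessel.

Theorem theorem3p6 (c k R : R) :
  c < 0 -> 0 < k -> 0 < R ->
  (* (1) *)
  (convex_pos (fun t => ln (fB c k (R * exp (- t)))) /\
   forall x y, 0 < x -> 0 < y ->
     fB c k (sqrt (x * y)) <= sqrt (fB c k x * fB c k y) /\
     (fB c k (sqrt (x * y)) = sqrt (fB c k x * fB c k y) <-> x = y)) /\
  (* (2) *)
  (concave_pos (fun x => ln (fB c k x)) /\
   forall x y, 0 < x -> 0 < y ->
     sqrt (fB c k x * fB c k y) <= fB c k ((x + y) / 2) /\
     (sqrt (fB c k x * fB c k y) = fB c k ((x + y) / 2) <-> x = y)) /\
  (* (3) *)
  (convex_pos (fB c k) /\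
   forall x y, 0 < x -> 0 < y ->
     fB c k ((x + y) / 2) <= (fB c k x + fB c k y) / 2 /\
     (fB c k ((x + y) / 2) = (fB c k x + fB c k y) / 2 <-> x = y)) /\
  (* (4) *)
  (k > -1 - c * R / 4 ->
   concave_pos (fun t => fB c k (R * (1 - exp (- t)))) /\
   forall x y, 0 < x < R -> 0 < y < R ->
     (fB c k x + fB c k y) / 2 <= fB c k (R - sqrt ((R - x) * (R - y))) /\
     ((fB c k x + fB c k y) / 2 = fB c k (R - sqrt ((R - x) * (R - y))) <-> x = y)).
Proof.
  intros hc hk hR.
  split; [apply fB_log_convex_in_log; assumption |].
  split; [apply fB_log_concave; assumption |].
  split; [apply fB_convex; assumption |].
  apply fB_concave_in_exp_reparam; assumption.
Qed.
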